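(* Let $k\ge1$ and let $H$ be a $k$-local operator on $N$ qubits (not necessarily Hermitian). If $H|W^q\rangle=0$ for all $q\in\{0,1,\dots,\min(2k,N)\}$, then $H|W^p\rangle=0$ for all $p\in\{0,1,\dots,N\}$.
   Context: System of $N$ qubits with local basis $|0\rangle,|1\rangle$; $s_i^\dagger$ acts on site $i$ as $s^\dagger|0\rangle=|1\rangle$, $s^\dagger|1\rangle=0$, $s_i=(s_i^\dagger)^\dagger$; $|\overline 0\rangle=|0\rangle^{\otimes N}$. Every operator has a unique expansion in normal-ordered strings $s^\dagger_{j_1}\cdots s^\dagger_{j_n}s_{k_1}\cdots s_{k_m}$ (the $j$'s pairwise distinct, the $k$'s pairwise distinct); an operator is $k$-local if every string with nonzero coefficient involves at most $k$ distinct sites. $S^\dagger=\sum_i s_i^\dagger$ and $|W^p\rangle$ is the normalization of $(S^\dagger)^p|\overline 0\rangle$ for $p=0,\dots,N$. *)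

(* Scalars: an arbitrary numClosedFieldType C (e.g. the complex numbers). *)
From mathcomp Require Import all_boot all_order all_algebra.
Set Implicit Arguments. Unset Strict Implicit. Unset Printing Implicit Defensive.
Import Order.TTheory GRing.Theory Num.Theory.
Local Open Scope ring_scope.

(* Computational basis of N qubits: a basis state |x> is labelled by the set
   x : {set 'I_N} of sites in state |1>.  Vectors and operators are given by
   their coordinates / matrix elements <y|A|x> in this basis. *)
Definition vec (C : numClosedFieldType) (N : nat) := {set 'I_N} -> C.
Definition op (C : numClosedFieldType) (N : nat) := {set 'I_N} -> {set 'I_N} -> C.

Section Ops.
Variables (C : numClosedFieldType) (N : nat).

Definition opmul (A B : op C N) : op C N :=
  fun y x => \sum_(z : {set 'I_N}) A y z * B z x.
Definition opid : op C N := fun y x => (y == x)%:R.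
Definition apply (A : op C N) (v : vec C N) : vec C N :=
  fun y => \sum_(x : {set 'I_N}) A y x * v x.

Definition sdag (i : 'I_N) : op C N :=
  fun y x => ((i \notin x) && (y == i |: x))%:R.
Definition sann (i : 'I_N) : op C N :=
  fun y x => ((i \in x) && (y == x :\ i))%:R.

Definition nstring (J K : {set 'I_N}) : op C N :=
  opmul (foldr (fun j A => opmul (sdag j) A) opid (enum J))
        (foldr (fun k A => opmul (sann k) A) opid (enum K)).

Definition klocal (k : nat) (H : op C N) : Prop :=
  exists c : {set 'I_N} -> {set 'I_N} -> C,
    (forall y x, H y x = \sum_(J : {set 'I_N}) \sum_(K : {set 'I_N}) c J K * nstring J K y x)
    /\ (forall J K, c J K != 0 -> (#|J :|: K| <= k)%N).

Definition Sdag : op C N := fun y x => \sum_(i < N) sdag i y x.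

Definition vac : vec C N := fun y => (y == set0)%:R.

Definition vnorm (v : vec C N) : C := sqrtC (\sum_(y : {set 'I_N}) `|v y| ^+ 2).

Definition Wstate (p : nat) : vec C N :=
  let v := iter p (apply Sdag) vac in fun y => (vnorm v)^-1 * v y.

End Ops.

From mathcomp Require Import all_boot all_order all_algebra zify.
Import Order.TTheory GRing.Theory Num.Theory.
Local Open Scope ring_scope.
Set Implicit Arguments. Unset Strict Implicit.

(* Up to normalisation |W^p> is the Dicke vector D_p, the indicator of the
   basis states of weight p.  The amplitude <y| s^dag_J s_K |D_p> of a
   normal-ordered string does not change when a site r of y outside J :|: K is
   removed from y and p is lowered by one.  So if X is a set of k+1 sites of y,
   every string of a k-local H misses some r in X, and the signed sum over
   S \subset X of <y :\: S| H |D_(p - |S|)> vanishes (pair S with S toggled at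
   r); its S = set0 term expresses <y|H|D_p> through lower weights.  If instead
   y has at most k ones and p > 2k, the weight p is out of reach of every
   string.  Strong induction on p thus reduces everything to weights q <= 2k. *)

Lemma sum_subset_toggle_eq0 (T : finType) (V : zmodType) (X : {set T}) r
    (F : {set T} -> V) :
  r \in X -> (forall S : {set T}, S \subset X -> r \notin S -> F (r |: S) = - F S) ->
  \sum_(S : {set T} | S \subset X) F S = 0.
Proof.
move=> rX hF.
pose t (S : {set T}) := if r \in S then S :\ r else r |: S.
have tK : involutive t.
  move=> S; rewrite /t; case: (boolP (r \in S)) => rS.
    by rewrite setD11 setD1K.
  by rewrite setU11 setU1K.
rewrite (bigID (fun S : {set T} => r \in S)) /= (reindex_inj (inv_inj tK)) /=.
rewrite (eq_big (fun S : {set T} => (S \subset X) && (r \notin S)) (fun S => - F S)).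
- by rewrite sumrN addNr.
- move=> S; rewrite /t; case: ifP => rS; first by rewrite setD11 !andbF.
  by rewrite subUset sub1set rX setU11 andbT.
- move=> S /andP[]; rewrite /t; case: ifP => [|/negbT rS]; first by rewrite setD11.
  by rewrite subUset => /andP[_ SX] _; rewrite hF.
Qed.

Section DickeAmplitude.
Variable T : finType.
Implicit Types (J K X y : {set T}).

(* The amplitude <y| s^dag_J s_K |D_p>, see apply_nstring_dicke below. *)
Definition nstring_dicke_coef J K y (p : nat) : bool :=
  [&& J \subset y, (y :\: J) :&: K == set0 & #|(y :\: J) :|: K| == p].

Lemma nstring_dicke_coefD1 J K y p r :
  r \in y -> r \notin J :|: K -> (0 < p)%N ->
  nstring_dicke_coef J K y p = nstring_dicke_coef J K (y :\ r) p.-1.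
Proof.
rewrite inE negb_or => ry /andP[rJ rK] p_gt0.
have eI : (y :\ r :\: J) :&: K = (y :\: J) :&: K.
  apply/setP => x; rewrite !inE; case: (eqVneq x r) => [->|] //=.
  by rewrite (negbTE rK) !andbF.
have eU : (y :\: J) :|: K = r |: ((y :\ r :\: J) :|: K).
  by apply/setP => x; rewrite !inE; case: (eqVneq x r) => [->|] //=; rewrite ry rJ.
rewrite /nstring_dicke_coef subsetD1 rJ andbT eI eU cardsU1 !inE eqxx (negbTE rK) /=.
by rewrite andbF; case: p p_gt0.
Qed.

Lemma nstring_dicke_coef_gt J K y p :
  (#|y| + #|J :|: K| < p)%N -> ~~ nstring_dicke_coef J K y p.
Proof.
move=> hp; apply/negP => /and3P[_ _ /eqP e].
have h1 : (#|y :\: J :|: K| <= #|y :\: J| + #|K|)%N by rewrite cardsU leq_subr.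
have h2 : (#|y :\: J| <= #|y|)%N by apply/subset_leq_card/subsetDl.
have h3 : (#|K| <= #|J :|: K|)%N by apply/subset_leq_card/subsetUr.
lia.
Qed.

Lemma sum_alternating_nstring_dicke_coef (R : pzRingType) J K y X r p :
  X \subset y -> r \in X -> r \notin J :|: K -> (#|X| <= p)%N ->
  \sum_(S : {set T} | S \subset X)
     (-1) ^+ #|S| * (nstring_dicke_coef J K (y :\: S) (p - #|S|))%:R = 0 :> R.
Proof.
move=> Xy rX rJK Xp; apply: (sum_subset_toggle_eq0 rX) => S SX rS.
have S_lt_p : (#|S| < p)%N.
  have : S \subset X :\ r by rewrite subsetD1 SX.
  by move/subset_leq_card; move: Xp; rewrite (cardsD1 r X) rX; lia.
rewrite cardsU1 rS exprS mulN1r mulNr setUC -setDDl add1n subnS.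
by rewrite -nstring_dicke_coefD1 ?subn_gt0 // !inE rS (subsetP Xy).
Qed.

End DickeAmplitude.

Section Operators.
Variables (C : numClosedFieldType) (N : nat).
Implicit Types (A B H : op C N) (v w : vec C N) (J K X x y z : {set 'I_N}).

Definition dicke (p : nat) : vec C N := fun x => (#|x| == p)%:R.

Lemma eq_apply A v w y : (forall x, v x = w x) -> apply A v y = apply A w y.
Proof. by move=> e; apply: eq_bigr => x _; rewrite e. Qed.

Lemma apply_eq0 A v y : (forall x, v x = 0) -> apply A v y = 0.
Proof. by move=> v0; apply: big1 => x _; rewrite v0 mulr0. Qed.

Lemma applyZ A (a : C) v y : apply A (fun x => a * v x) y = a * apply A v y.
Proof. by rewrite /apply big_distrr; apply: eq_bigr => x _; rewrite mulrCA. Qed.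

Lemma apply_opmul A B v y : apply (opmul A B) v y = apply A (apply B v) y.
Proof.
rewrite /apply /opmul; under eq_bigr do rewrite big_distrl /=.
rewrite exchange_big /=; apply: eq_bigr => z _.
by rewrite big_distrr /=; apply: eq_bigr => x _; rewrite mulrA.
Qed.

Lemma apply_opid v y : apply (@opid C N) v y = v y.
Proof.
rewrite /apply (bigD1 y) //= /opid eqxx mul1r big1 ?addr0 // => x.
by rewrite eq_sym => /negbTE ->; rewrite mul0r.
Qed.

Lemma apply_sann i v z : apply (sann C i) v z = (i \notin z)%:R * v (i |: z).
Proof.
rewrite /apply /sann; have [iz|iz] := boolP (i \in z).
  rewrite mul0r big1 // => x _; case: eqP => [ez|]; last by rewrite andbF mul0r.
  by move: iz; rewrite ez setD11.
rewrite (bigD1 (i |: z)) //= setU11 setU1K // eqxx mul1r big1 ?addr0 // => x xz.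
case: (boolP (i \in x)) => ix /=; last by rewrite mul0r.
by case: eqP => [ez|]; [move: xz; rewrite ez setD1K // eqxx | rewrite mul0r].
Qed.

Lemma apply_sdag i v y : apply (sdag C i) v y = (i \in y)%:R * v (y :\ i).
Proof.
rewrite /apply /sdag; have [iy|iy] := boolP (i \in y); last first.
  rewrite mul0r big1 // => x _; case: eqP => [ey|]; last by rewrite andbF mul0r.
  by move: iy; rewrite ey setU11.
rewrite (bigD1 (y :\ i)) //= setD11 setD1K // eqxx mul1r big1 ?addr0 // => x xy.
case: (boolP (i \in x)) => ix /=; first by rewrite mul0r.
by case: eqP => [ey|]; [move: xy; rewrite ey setU1K // eqxx | rewrite mul0r].
Qed.

Lemma apply_foldr_sann (s : seq 'I_N) v z : uniq s ->
  apply (foldr (fun i A => opmul (sann C i) A) (@opid C N) s) v z =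
  (z :&: [set:: s] == set0)%:R * v (z :|: [set:: s]).
Proof.
elim: s z => [|i s IH] z /=.
  by rewrite apply_opid set_nil setI0 setU0 eqxx mul1r.
case/andP => si us; rewrite apply_opmul apply_sann IH // mulrA -natrM mulnb.
have siS : i \notin [set:: s] by rewrite inE.
rewrite set_cons setUCA setUA setIUl setIUr !setU_eq0 (setIC z [set i]).
by rewrite !setI_eq0 !disjoints1 siS.
Qed.

Lemma apply_foldr_sdag (s : seq 'I_N) v y : uniq s ->
  apply (foldr (fun i A => opmul (sdag C i) A) (@opid C N) s) v y =
  ([set:: s] \subset y)%:R * v (y :\: [set:: s]).
Proof.
elim: s y => [|i s IH] y /=.
  by rewrite apply_opid set_nil sub0set setD0 mul1r.
case/andP => si us; rewrite apply_opmul apply_sdag IH // mulrA -natrM mulnb.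
by rewrite set_cons subsetD1 inE si andbT subUset sub1set setDDl.
Qed.

Lemma apply_nstring J K v y :
  apply (nstring C J K) v y =
  (J \subset y)%:R * ((y :\: J) :&: K == set0)%:R * v ((y :\: J) :|: K).
Proof.
rewrite /nstring apply_opmul apply_foldr_sdag ?enum_uniq // set_enum.
by rewrite apply_foldr_sann ?enum_uniq // set_enum mulrA.
Qed.

Lemma apply_nstring_dicke J K p y :
  apply (nstring C J K) (dicke p) y = (nstring_dicke_coef J K y p)%:R.
Proof. by rewrite apply_nstring /dicke -!natrM !mulnb -andbA. Qed.

Lemma klocal_apply k H : klocal k H ->
  exists c : {set 'I_N} -> {set 'I_N} -> C,
    (forall v y, apply H v y = \sum_J \sum_K c J K * apply (nstring C J K) v y)
    /\ (forall J K, c J K != 0 -> (#|J :|: K| <= k)%N).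
Proof.
case=> c [Hc ck]; exists c; split=> // v y.
rewrite /apply; under eq_bigr do rewrite Hc big_distrl /=.
rewrite exchange_big /=; apply: eq_bigr => J _; under eq_bigr do rewrite big_distrl /=.
rewrite exchange_big /=; apply: eq_bigr => K _.
by rewrite big_distrr /=; apply: eq_bigr => x _; rewrite mulrA.
Qed.

Lemma klocal_apply_dicke_eq0 k H p y :
  klocal k H -> (#|y| + k < p)%N -> apply H (dicke p) y = 0.
Proof.
case/klocal_apply=> c [-> ck] hp; apply: big1 => J _; apply: big1 => K _.
have [->|/ck JK_le_k] := eqVneq (c J K) 0; first by rewrite mul0r.
rewrite apply_nstring_dicke (negbTE (nstring_dicke_coef_gt _)) ?mulr0 //.
exact: leq_ltn_trans (leq_add _ JK_le_k) hp.
Qed.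

Lemma klocal_sum_alternating_dicke k H p y X :
  klocal k H -> X \subset y -> #|X| = k.+1 -> (#|X| <= p)%N ->
  \sum_(S : {set 'I_N} | S \subset X)
     (-1) ^+ #|S| * apply H (dicke (p - #|S|)) (y :\: S) = 0.
Proof.
case/klocal_apply=> c [Hc ck] Xy cardX Xp.
under eq_bigr do rewrite Hc big_distrr /=.
rewrite exchange_big /=; apply: big1 => J _.
under eq_bigr do rewrite big_distrr /=.
rewrite exchange_big /=; apply: big1 => K _.
under eq_bigr do rewrite apply_nstring_dicke mulrCA.
rewrite -big_distrr /=; have [->|/ck JK_le_k] := eqVneq (c J K) 0; first by rewrite mul0r.
have /subsetPn[r rX rJK] : ~~ (X \subset J :|: K).
  by apply/negP => /subset_leq_card; lia.
by rewrite (sum_alternating_nstring_dicke_coef _ Xy rX rJK Xp) mulr0.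
Qed.

Lemma klocal_dicke_eq0 k H :
  klocal k H -> (forall q, (q <= 2 * k)%N -> forall y, apply H (dicke q) y = 0) ->
  forall p y, apply H (dicke p) y = 0.
Proof.
move=> Hk Hsmall; elim/ltn_ind => p IH y.
have [p_le_2k|p_gt_2k] := leqP p (2 * k); first exact: Hsmall p_le_2k y.
have [y_le_k|] := leqP #|y| k; first by apply: klocal_apply_dicke_eq0 Hk _; lia.
case/card_geqP => s [us size_s sy].
have cardX : #|[set:: s]| = k.+1 by rewrite cardsE (card_uniqP us).
have Xy : [set:: s] \subset y by apply/subsetP => x; rewrite inE => /sy.
have := @klocal_sum_alternating_dicke k H p y _ Hk Xy cardX.
rewrite (bigD1 set0) ?sub0set //= cards0 expr0 mul1r subn0 setD0 big1 ?addr0.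
  by apply; rewrite cardX; lia.
move=> S /andP[_ S0]; rewrite IH ?mulr0 //.
by rewrite ltn_subrL lt0n cards_eq0 S0 (leq_ltn_trans (leq0n _) p_gt_2k).
Qed.

Lemma iter_Sdag_vac p y :
  iter p (apply (Sdag C (N:=N))) (vac C (N:=N)) y = p`!%:R * dicke p y.
Proof.
elim: p y => [|p IH] y /=; first by rewrite /vac /dicke cards_eq0 mul1r.
rewrite /apply /Sdag; under eq_bigr do rewrite big_distrl.
rewrite exchange_big /=.
under eq_bigr => i _ do rewrite -/(apply (sdag C i) _ y) apply_sdag IH mulr_natl mulrb.
rewrite -big_mkcond (eq_bigr (fun _ => p`!%:R * (#|y|.-1 == p)%:R)); last first.
  by move=> i iy; rewrite /dicke (cardsD1 i y) iy.
rewrite sumr_const /dicke; case: #|y| => [|m] /=; first by rewrite mulr0n mulr0.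
rewrite factS natrM eqSS; case: eqP => [->|_]; last by rewrite !mulr0 mul0rn.
by rewrite !mulr1 mulr_natl.
Qed.

Lemma vnorm_eq0 v : vnorm v = 0 -> forall x, v x = 0.
Proof.
move/eqP; rewrite sqrtC_eq0 => /eqP v0 x.
have /eqP := psumr_eq0P (fun x _ => exprn_ge0 2 (normr_ge0 (v x))) v0 (i:=x) isT.
by rewrite expf_eq0 normr_eq0 => /eqP.
Qed.

Lemma apply_Wstate H q y :
  apply H (@Wstate C N q) y =
  (vnorm (iter q (apply (Sdag C (N:=N))) (vac C (N:=N))))^-1 * q`!%:R
    * apply H (dicke q) y.
Proof. by rewrite -applyZ; apply: eq_apply => x; rewrite /Wstate iter_Sdag_vac mulrA. Qed.

Lemma apply_dicke_eq0_Wstate H q :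
  (forall y, apply H (@Wstate C N q) y = 0) -> forall y, apply H (dicke q) y = 0.
Proof.
have q_fact_neq0 : q`!%:R != 0 :> C by rewrite pnatr_eq0 -lt0n fact_gt0.
move=> HW y; move: (HW y); rewrite apply_Wstate.
set v := iter q _ _; have [/vnorm_eq0 v0 _|vn0] := eqVneq (vnorm v) 0.
  apply: apply_eq0 => x; apply/eqP.
  have := iter_Sdag_vac q x; rewrite -/v v0 => /esym/eqP.
  by rewrite mulf_eq0 (negbTE q_fact_neq0).
by move/eqP; rewrite !mulf_eq0 invr_eq0 (negbTE vn0) (negbTE q_fact_neq0) => /eqP.
Qed.

Lemma dicke_gtN q x : (N < q)%N -> dicke q x = 0.
Proof.
move=> Nq; rewrite /dicke; case: eqP => // e.
by have := max_card (mem x); rewrite card_ord -/#|x| e; lia.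
Qed.

End Operators.

Theorem proposition3 (C : numClosedFieldType) (N k : nat) (H : op C N) :
  (1 <= k)%N -> klocal k H ->
  (forall q : nat, (q <= minn (2 * k) N)%N -> forall y, apply H (@Wstate C N q) y = 0) ->
  forall p : nat, (p <= N)%N -> forall y, apply H (@Wstate C N p) y = 0.
Proof.
move=> _ Hk HW p _ y.
rewrite apply_Wstate (klocal_dicke_eq0 Hk) ?mulr0 // => q q_le_2k z.
have [q_le_N|N_lt_q] := leqP q N.
  by apply: apply_dicke_eq0_Wstate => w; apply: HW; rewrite leq_min q_le_2k.
by apply: apply_eq0 => x; apply: dicke_gtN.
Qed.
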